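(* Let $T$ be a rooted binary tree on $n$ leaves with minimal Colless index, i.e. $\mathcal{C}(T)=c_n$. Then $T$ has minimal Sackin index among all rooted binary trees with $n$ leaves.
   Context: A rooted binary tree with $n\geq 2$ leaves is a rooted tree whose root has degree 2 and all other internal nodes have degree 3; for $n=1$ it is a single node. For a node $u$ let $n_u$ be the number of leaves of the subtree rooted at $u$. For an internal node $v$ with children $v_1,v_2$, the Colless index is $\mathcal{C}(T)=\sum_v|n_{v_1}-n_{v_2}|$ over internal nodes $v$; $c_n$ is its minimum over rooted binary trees with $n$ leaves. The Sackin index is $\mathcal{S}(T)=\sum_{u}n_u$, the sum over all internal nodes $u$ of $T$. *)

From mathcomp Require Import all_boot.

(* Rooted binary trees: a single leaf, or a root with two (ordered) subtrees.
   The order of children is irrelevant for the Colless and Sackin indices. *)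
Inductive tree : Type :=
| Leaf : tree
| Node : tree -> tree -> tree.

Fixpoint leaves (t : tree) : nat :=
  match t with
  | Leaf => 1
  | Node l r => leaves l + leaves r
  end.

Definition absdiff (a b : nat) : nat := (a - b) + (b - a).

Fixpoint colless (t : tree) : nat :=
  match t with
  | Leaf => 0
  | Node l r => absdiff (leaves l) (leaves r) + colless l + colless r
  end.

Fixpoint sackin (t : tree) : nat :=
  match t with
  | Leaf => 0
  | Node l r => leaves l + leaves r + sackin l + sackin r
  end.

Definition colless_minimal (t : tree) : Prop :=
  forall t' : tree, leaves t' = leaves t -> colless t <= colless t'.

Definition sackin_minimal (t : tree) : Prop :=
  forall t' : tree, leaves t' = leaves t -> sackin t <= sackin t'.

(* Every internal node contributes n_l + n_r = |n_l - n_r| + 2 min(n_l, n_r),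
   so S = C + D, where D is the index with node weight 2 min(n_l, n_r).
   The maximally balanced tree B, which splits every subtree into halves,
   simultaneously minimises S and maximises D.  Hence a Colless-minimal T
   satisfies S(T) = C(T) + D(T) <= C(B) + D(B) = S(B), the minimum of S. *)

From mathcomp Require Import all_boot zify.

Fixpoint node_index (g : nat -> nat -> nat) (t : tree) : nat :=
  match t with
  | Leaf => 0
  | Node l r => g (leaves l) (leaves r) + node_index g l + node_index g r
  end.

Fixpoint min_index (t : tree) : nat :=
  match t with
  | Leaf => 0
  | Node l r => 2 * minn (leaves l) (leaves r) + min_index l + min_index r
  end.

Lemma leaves_gt0 t : 0 < leaves t.
Proof. by elim: t => //= l Hl r Hr; rewrite addn_gt0 Hl. Qed.

Lemma sackinE t : sackin t = node_index addn t.
Proof. by elim: t => //= l -> r ->. Qed.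

Lemma min_indexE t : min_index t = node_index (fun a b => 2 * minn a b) t.
Proof. by elim: t => //= l -> r ->. Qed.

Lemma sackin_colless_min_index t : sackin t = colless t + min_index t.
Proof. by elim: t => //= l -> r ->; rewrite /absdiff; lia. Qed.

(* [n] units of fuel suffice, since both halves of [n >= 2] are below [n]. *)
Fixpoint balanced_tree_rec (fuel n : nat) : tree :=
  if fuel is fuel'.+1 then
    if n <= 1 then Leaf
    else Node (balanced_tree_rec fuel' n./2) (balanced_tree_rec fuel' (uphalf n))
  else Leaf.

Definition balanced_tree (n : nat) : tree := balanced_tree_rec n n.

Lemma balanced_tree_recE fuel n : n <= fuel -> balanced_tree_rec fuel n = balanced_tree n.
Proof.
suff rec_fuel k k' m : m <= k -> m <= k' -> balanced_tree_rec k m = balanced_tree_rec k' m.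
  by move=> le_n_fuel; apply: rec_fuel.
elim: k k' m => [|k IH] [|k'] [|[|m]] //= le_m_k le_m_k'.
by rewrite !(IH k') //; lia.
Qed.

Lemma balanced_treeE n : 1 < n ->
  balanced_tree n = Node (balanced_tree n./2) (balanced_tree (uphalf n)).
Proof.
case: n => [|n] // n_gt1; rewrite {1}/balanced_tree.
have -> : balanced_tree_rec n.+1 n.+1
    = Node (balanced_tree_rec n n.+1./2) (balanced_tree_rec n (uphalf n.+1)).
  by case: n n_gt1 => [|n].
by rewrite !balanced_tree_recE //; lia.
Qed.

Lemma leaves_balanced_tree n : 0 < n -> leaves (balanced_tree n) = n.
Proof.
elim/ltn_ind: n => n IH n_gt0.
have [n_le1|n_gt1] := leqP n 1; first by case: n n_le1 n_gt0 {IH} => [|[]].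
by rewrite balanced_treeE //= !IH //; lia.
Qed.

Lemma node_index_balanced_tree g n : 1 < n ->
  node_index g (balanced_tree n) = g n./2 (uphalf n)
    + node_index g (balanced_tree n./2) + node_index g (balanced_tree (uphalf n)).
Proof. by move=> n_gt1; rewrite balanced_treeE //= !leaves_balanced_tree //; lia. Qed.

Lemma node_index_balanced_tree_split g a b : (forall x y, g x y = g y x) ->
  0 < a -> 0 < b -> a <= b.+1 -> b <= a.+1 ->
  node_index g (balanced_tree (a + b))
    = g a b + node_index g (balanced_tree a) + node_index g (balanced_tree b).
Proof.
move=> gC; wlog le_ab : a b / a <= b => [wlog|a_gt0 b_gt0 _ le_ba].
  have [|/ltnW le_ba] := leqP a b; first exact: wlog.
  by move=> *; rewrite addnC gC wlog // addnAC.
rewrite node_index_balanced_tree; last by lia.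
by have [-> ->] : (a + b)./2 = a /\ uphalf (a + b) = b by lia.
Qed.

Lemma balanced_tree_split_indices a b : 0 < a -> 0 < b -> a <= b.+1 -> b <= a.+1 ->
  sackin (balanced_tree (a + b))
    = a + b + sackin (balanced_tree a) + sackin (balanced_tree b) /\
  min_index (balanced_tree (a + b))
    = 2 * minn a b + min_index (balanced_tree a) + min_index (balanced_tree b).
Proof.
by move=> *; rewrite !sackinE !min_indexE !node_index_balanced_tree_split // => *; lia.
Qed.

Lemma balanced_tree_indices_halves n : 1 < n ->
  sackin (balanced_tree n)
    = n + sackin (balanced_tree n./2) + sackin (balanced_tree (uphalf n)) /\
  min_index (balanced_tree n)
    = 2 * n./2 + min_index (balanced_tree n./2) + min_index (balanced_tree (uphalf n)).
Proof.
move=> n_gt1; rewrite !sackinE !min_indexE.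
by rewrite !(node_index_balanced_tree _ _ n_gt1); split; lia.
Qed.

Lemma balanced_tree_node_bounds a b : 0 < a -> 0 < b ->
  sackin (balanced_tree (a + b))
    <= a + b + sackin (balanced_tree a) + sackin (balanced_tree b) /\
  2 * minn a b + min_index (balanced_tree a) + min_index (balanced_tree b)
    <= min_index (balanced_tree (a + b)).
Proof.
have [n] := ubnP (a + b); elim: n a b => // n IH a b ab_lt_n.
wlog le_ab : a b ab_lt_n / a <= b => [wlog|a_gt0 b_gt0].
  case/orP: (leq_total a b) => [le_ab|le_ba]; first exact: wlog.
  move=> a_gt0 b_gt0; rewrite [a + b]addnC in ab_lt_n *.
  have [Hs Hd] := wlog b a ab_lt_n le_ba b_gt0 a_gt0.
  by rewrite minnC; split; lia.
have [le_b_a1|gt_b_a1] := leqP b a.+1.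
  by have [-> ->] := balanced_tree_split_indices a b a_gt0 b_gt0 (leqW le_ab) le_b_a1.
have [Sb Db] := balanced_tree_indices_halves b ltac:(lia).
have [a_eq1|a_gt1] : a = 1 \/ 1 < a by lia.
- (* [a] has no halves: the extra leaf joins the smaller half of [b]. *)
  subst a; have -> : 1 + b = (1 + b./2) + uphalf b by lia.
  have [-> ->] := balanced_tree_split_indices (1 + b./2) (uphalf b)
    ltac:(lia) ltac:(lia) ltac:(lia) ltac:(lia).
  have [IHs IHd] := IH 1 b./2 ltac:(lia) isT ltac:(lia).
  have [s1 d1] : sackin (balanced_tree 1) = 0 /\ min_index (balanced_tree 1) = 0 by [].
  by split; lia.
have [Sa Da] := balanced_tree_indices_halves a a_gt1.
(* Pairing the smaller half of [a] with the larger half of [b] yields two parts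
   that differ by at most one, i.e. a balanced split of [a + b]. *)
have -> : a + b = (a./2 + uphalf b) + (uphalf a + b./2) by lia.
have [-> ->] := balanced_tree_split_indices (a./2 + uphalf b) (uphalf a + b./2)
  ltac:(lia) ltac:(lia) ltac:(lia) ltac:(lia).
have [IHs1 IHd1] := IH a./2 (uphalf b) ltac:(lia) ltac:(lia) ltac:(lia).
have [IHs2 IHd2] := IH (uphalf a) b./2 ltac:(lia) ltac:(lia) ltac:(lia).
by split; lia.
Qed.

Lemma balanced_tree_extremal t :
  sackin (balanced_tree (leaves t)) <= sackin t /\
  min_index t <= min_index (balanced_tree (leaves t)).
Proof.
elim: t => [|l [IHsl IHdl] r [IHsr IHdr]] //=.
have [Hs Hd] :=
  balanced_tree_node_bounds (leaves l) (leaves r) (leaves_gt0 l) (leaves_gt0 r).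
by split; lia.
Qed.

Theorem proposition3 (n : nat) (T : tree) :
  leaves T = n -> colless_minimal T -> sackin_minimal T.
Proof.
move=> _ colless_min t' leaves_t'.
set B := balanced_tree (leaves T).
have leaves_B : leaves B = leaves T by rewrite leaves_balanced_tree ?leaves_gt0.
have [_ min_index_T] := balanced_tree_extremal T.
have [sackin_B _] := balanced_tree_extremal t'.
rewrite leaves_t' -/B in sackin_B.
apply: leq_trans sackin_B.
rewrite !sackin_colless_min_index.
exact: leq_add (colless_min B leaves_B) min_index_T.
Qed.
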